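(* Let $\ell$ be a positive integer and let $p_1,\dots,p_\ell$ be integers with $j\le p_j\le j(j+1)$ for all $j$ such that the $\ell\times\ell$ matrix $A$ with $A_{ij}=C_{p_j}(i)$ ($i,j\in[\ell]$) is invertible. Let $\mathbf x^\star$ be the solution of $A\mathbf x=\mathbf y$ where $y_i=i$ for $i\in[\ell]$. Then $|x^\star_i|\le\ell^{O(\ell^4)}$ for all $i$.
   Context: For a positive integer $p$ and $y\ge0$, $C_p(y)=p\,(1-(1-1/p)^y)$. *)

From mathcomp Require Import all_boot all_order all_algebra.
From mathcomp Require Import reals.
Set Implicit Arguments. Unset Strict Implicit. Unset Printing Implicit Defensive.
Import Order.TTheory GRing.Theory Num.Theory.
Local Open Scope ring_scope.

(* C_p(y) = p (1 - (1 - 1/p)^y), here only needed at natural arguments y. *)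
Definition Cp {R : realFieldType} (p y : nat) : R :=
  p%:R * (1 - (1 - p%:R^-1) ^+ y).

From mathcomp Require Import all_boot all_order all_algebra.
From mathcomp Require Import reals.
From mathcomp Require Import zify.
Set Implicit Arguments. Unset Strict Implicit. Unset Printing Implicit Defensive.
Import Order.TTheory GRing.Theory Num.Theory.
Local Open Scope ring_scope.

(* Cramer's rule writes x_i as a ratio of determinants. The numerators are
   small: an m x m determinant with entries bounded by K is at most m! K^m, and
   0 <= C_p(i) <= p <= l(l+1). The denominator det A is bounded away from 0:
   p^(l-1) C_p(i) = p^l - (p-1)^i p^(l-i) is an integer for i <= l, so
   multiplying column j by p_j^(l-1) turns A into an integer matrix with
   nonzero, hence at least 1 in absolute value, determinant; thus
   |det A|^-1 <= (l(l+1))^(l(l-1)). *)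

Lemma det_norm_le (R : numDomainType) (m : nat) (B : 'M[R]_m) (K : R) :
  (forall i j, `|B i j| <= K) -> `|\det B| <= (m`!)%:R * K ^+ m.
Proof.
move=> leBK; rewrite /determinant.
apply: le_trans (ler_norm_sum _ _ _) _.
apply: (@le_trans _ _ (\sum_s K ^+ m)).
  apply: ler_sum => s _.
  rewrite normrM normr_sign mul1r normr_prod -[in K ^+ m](@card_ord m) -prodr_const.
  by apply: ler_prod => i _; rewrite normr_ge0 leBK.
by rewrite sumr_const perm.card_Sn mulr_natl.
Qed.

Lemma det_mx_in (R : comPzRingType) (S : subringClosed R) (m : nat) (B : 'M[R]_m) :
  (forall i j, B i j \in S) -> \det B \in S.
Proof.
move=> BS; apply: rpred_sum => s _.
by rewrite rpredM ?rpredX ?rpredN1 //; apply: rpred_prod.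
Qed.

Lemma Cp_ge0 (R : realFieldType) (p k : nat) : (0 < p)%N -> 0 <= Cp (R:=R) p k.
Proof.
move=> p_gt0; rewrite /Cp mulr_ge0 ?ler0n // subr_ge0 exprn_ile1 //.
  by rewrite subr_ge0 invf_le1 ?ltr0n // ler1n.
by rewrite lerBlDr lerDl invr_ge0 ler0n.
Qed.

Lemma Cp_le (R : realFieldType) (p k : nat) : (0 < p)%N -> Cp (R:=R) p k <= p%:R.
Proof.
move=> p_gt0; rewrite /Cp ger_pMr ?ltr0n // lerBlDr lerDl exprn_ge0 //.
by rewrite subr_ge0 invf_le1 ?ltr0n // ler1n.
Qed.

Lemma Cp_mul_exp (R : realFieldType) (p k n : nat) : (0 < p)%N -> (k <= n.+1)%N ->
  Cp (R:=R) p k * p%:R ^+ n = (p ^ n.+1)%:R - (p.-1 ^ k * p ^ (n.+1 - k))%:R.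
Proof.
move=> p_gt0; rewrite /Cp mulrAC -exprS; move: n.+1 => {}n le_kn.
have p_neq0 : p%:R != 0 :> R by rewrite pnatr_eq0 -lt0n.
have one_sub_inv : 1 - p%:R^-1 = p.-1%:R / p%:R :> R.
  apply: (mulIf p_neq0); rewrite divfK // mulrBl mul1r mulVf //.
  by rewrite -{1}(prednK p_gt0) -natr1 addrK.
rewrite -(subnKC le_kn) addKn natrM !natrX exprD one_sub_inv.
by rewrite mulrBr mulr1 expr_div_n mulrAC [_ * (_ / _)]mulrC divfK ?expf_neq0.
Qed.

Lemma invr_norm_det_le (R : archiNumFieldType) (m : nat) (A : 'M[R]_m)
    (d : 'I_m -> R) (e : R) :
  \det A != 0 -> (forall j, 0 < d j <= e) ->
  (forall i j, A i j * d j \is a Num.int) ->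
  `|\det A|^-1 <= e ^+ m.
Proof.
move=> detA_neq0 d_bnd Ad_int.
have d_gt0 j : 0 < d j by case/andP: (d_bnd j).
have prod_gt0 : 0 < \prod_j d j by apply: prodr_gt0.
have det_scaled : \det (A *m diag_mx (\row_j d j)) = \det A * \prod_j d j.
  by rewrite det_mulmx det_diag; under eq_bigr do rewrite mxE.
have ge1 : 1 <= `|\det A| * \prod_j d j.
  rewrite -(gtr0_norm prod_gt0) -normrM -det_scaled norm_intr_ge1 //.
    by rewrite det_mx_in // => i j; rewrite mul_mx_diag !mxE; apply: Ad_int.
  by rewrite det_scaled mulf_neq0 // lt0r_neq0.
apply: (@le_trans _ _ (\prod_j d j)).
  by rewrite -[_^-1]mul1r ler_pdivrMr ?normr_gt0 // mulrC.
rewrite -[in e ^+ m](@card_ord m) -prodr_const.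
by apply: ler_prod => j _; case/andP: (d_bnd j) => /ltW -> ->.
Qed.

Lemma norm_invmx_mul_le (R : numFieldType) (n : nat) (A : 'M[R]_n.+1)
    (b : 'cV[R]_n.+1) (K D B : R) :
  A \in unitmx -> (forall i j, `|A i j| <= K) -> `|\det A|^-1 <= D ->
  (forall i, `|b i 0| <= B) ->
  forall i, `|(invmx A *m b) i 0| <= n.+1%:R * (D * ((n`!)%:R * K ^+ n) * B).
Proof.
move=> unitA leAK leD leB i.
rewrite /invmx unitA mxE.
apply: le_trans (ler_norm_sum _ _ _) _.
rewrite [n.+1%:R * _]mulr_natl -[in _ *+ n.+1](@card_ord n.+1) -sumr_const.
apply: ler_sum => j _.
rewrite !mxE normrM normrM /cofactor normrM normr_sign mul1r normfV.
apply: ler_pM; rewrite ?mulr_ge0 ?invr_ge0 ?normr_ge0 //.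
apply: ler_pM; rewrite ?invr_ge0 ?normr_ge0 //.
by apply: det_norm_le => u v; rewrite !mxE.
Qed.

Lemma fact_le_exp (k : nat) : (k`! <= k.+1 ^ k)%N.
Proof.
elim: k => [//|k IH]; rewrite factS expnS leq_mul //.
by case: k IH => [|k] /leq_trans -> //; rewrite leq_exp2r.
Qed.

Lemma cramer_bound_le (n : nat) :
  (n.+1 * (((n.+1 * n.+2) ^ n) ^ n.+1 * (n`! * (n.+1 * n.+2) ^ n) * n.+1)
   <= n.+1 ^ (10 * n.+1 ^ 4))%N.
Proof.
case: n => [//|n]; set m := n.+2.
have le_mm1 : (m * m.+1 <= m ^ 3)%N by rewrite !expnS expn0 muln1 leq_mul2l; nia.
have le_pow : ((m * m.+1) ^ n.+1 <= m ^ (3 * n.+1))%N by rewrite expnM leq_exp2r.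
apply: (@leq_trans (m * ((m ^ (3 * n.+1)) ^ m * (m ^ n.+1 * m ^ (3 * n.+1)) * m))).
  rewrite leq_mul // leq_mul // leq_mul ?leq_exp2r ?le_pow //.
  by rewrite leq_mul ?le_pow ?fact_le_exp.
rewrite -!expnM -!expnD -expnSr -expnS leq_exp2l //; rewrite /m; nia.
Qed.

Theorem lemma11 (R : realType) :
  exists C : nat, forall (l : nat) (p : 'I_l -> nat),
    (0 < l)%N ->
    (forall j : 'I_l, (j.+1 <= p j <= j.+1 * j.+2)%N) ->
    let A : 'M[R]_l := \matrix_(i < l, j < l) Cp (p j) i.+1 in
    A \in unitmx ->
    forall x : 'cV[R]_l,
      A *m x = \col_(i < l) (i.+1)%:R ->
      forall i : 'I_l, `|x i ord0| <= (l%:R) ^+ (C * l ^ 4).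
Proof.
exists 10%N => -[//|n] p _ p_bnd A unitA x Ax i.
set N := (n.+1 * n.+2)%N.
have p_gt0 j : (0 < p j)%N by case/andP: (p_bnd j); case: (p j).
have p_leN j : (p j <= N)%N.
  case/andP: (p_bnd j) => _ /leq_trans; apply.
  by rewrite leq_mul // ltnS.
have leAN a b : `|A a b| <= N%:R.
  by rewrite mxE ger0_norm ?Cp_ge0 // (le_trans (Cp_le _ _ (p_gt0 b))) ?ler_nat.
have leD : `|\det A|^-1 <= (N%:R ^+ n) ^+ n.+1.
  apply: (invr_norm_det_le (d := fun j => (p j)%:R ^+ n)) => [|j|a b].
  - by rewrite -unitfE -unitmxE.
  - by rewrite exprn_gt0 ?ltr0n //= lerXn2r ?nnegrE ?ler0n ?ler_nat.
  - by rewrite mxE Cp_mul_exp // rpredB ?rpred_nat.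
have leb a : `|(\col_(i < n.+1) (i.+1)%:R : 'cV[R]_n.+1) a 0| <= n.+1%:R.
  by rewrite mxE normr_nat ler_nat.
rewrite -[x](mulKmx unitA) Ax.
apply: le_trans (norm_invmx_mul_le unitA leAN leD leb i) _.
by rewrite -natrX -!(natrX, natrM) ler_nat cramer_bound_le.
Qed.
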